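(* In the setting described in the context, fix $x^*\in X^*$ and $x\in\mathrm{dom}\,\Psi$, and let $R=\|x-x^*\|_L$. Then $$H(x,T(x))-F^*\leq\begin{cases}\left(1-\frac{F(x)-F^*}{2R^2}\right)(F(x)-F^* ), & \text{if } F(x)-F^*\leq R^2,\\ \frac12R^2<\frac12(F(x)-F^* ), & \text{otherwise.}\end{cases}$$
   Context: Let $U\in\mathbf{R}^{N\times N}$ be a column permutation of the $N\times N$ identity matrix, partitioned as $U=[U_1,\dots,U_n]$ with $U_i\in\mathbf{R}^{N\times N_i}$, $\sum_i N_i=N$. For $x\in\mathbf{R}^N$ write $x^{(i)}=U_i^Tx$, so $x=\sum_iU_ix^{(i)}$. Each $\mathbf{R}^{N_i}$ carries the norm $\|t\|_{(i)}=\langle B_it,t\rangle^{1/2}$ and dual norm $\|t\|_{(i)}^*=\langle B_i^{-1}t,t\rangle^{1/2}$ with $B_i$ positive definite. Consider minimizing $F(x)=f(x)+\Psi(x)$ over $\mathbf{R}^N$, where $f$ is convex and differentiable with $\|\nabla_if(x+U_it)-\nabla_if(x)\|_{(i)}^*\leq L_i\|t\|_{(i)}$ for all $x,t,i$ (constants $L_i>0$, $\nabla_if(x)=U_i^T\nabla f(x)$), and $\Psi(x)=\sum_i\Psi_i(x^{(i)})$ with each $\Psi_i$ proper closed convex. The problem has a minimizer; $F^*$ is the optimal value and $X^*$ the set of minimizers. Let $\|x\|_L=(\sum_iL_i\|x^{(i)}\|_{(i)}^2)^{1/2}$. Define $V_i(x,t)=\langle\nabla_if(x),t\rangle+\frac{L_i}{2}\|t\|_{(i)}^2+\Psi_i(x^{(i)}+t)$,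 $T^{(i)}(x)=\arg\min_tV_i(x,t)$, $T(x)=\sum_iU_iT^{(i)}(x)$, and $H(x,T)=f(x)+\langle\nabla f(x),T\rangle+\frac12\|T\|_L^2+\Psi(x+T)$. *)

From HB Require Import structures.
From mathcomp Require Import all_boot all_order all_algebra.
From mathcomp Require Import all_classical all_reals all_analysis.
Set Implicit Arguments. Unset Strict Implicit. Unset Printing Implicit Defensive.
Import Order.TTheory GRing.Theory Num.Theory.
Import numFieldNormedType.Exports.
Local Open Scope ring_scope.

Definition dotv (R : realType) (k : nat) (a b : 'cV[R]_k) : R :=
  \sum_(j < k) a j 0 * b j 0.

Definition bnorm (R : realType) (k : nat) (B : 'M[R]_k) (t : 'cV[R]_k) : R :=
  Num.sqrt (dotv (B *m t) t).
Definition bdnorm (R : realType) (k : nat) (B : 'M[R]_k) (t : 'cV[R]_k) : R :=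
  Num.sqrt (dotv (invmx B *m t) t).

Definition posdef (R : realType) (k : nat) (B : 'M[R]_k) : Prop :=
  B^T = B /\ forall t : 'cV[R]_k, t != 0 -> 0 < dotv (B *m t) t.

Definition Ublk (R : realType) (n : nat) (Ns : 'I_n -> nat)
  (U : 'M[R]_(\sum_(i < n) Ns i)) (i : 'I_n) : 'M[R]_(\sum_(i < n) Ns i, Ns i) :=
  submxrow U i.

Definition blk (R : realType) (n : nat) (Ns : 'I_n -> nat)
  (U : 'M[R]_(\sum_(i < n) Ns i)) (i : 'I_n) (x : 'cV[R]_(\sum_(i < n) Ns i))
  : 'cV[R]_(Ns i) := (Ublk U i)^T *m x.

Definition convex_fun (R : realType) (k : nat) (f : 'cV[R]_k -> R) : Prop :=
  forall (x y : 'cV[R]_k) (l : R), 0 <= l <= 1 ->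
    f (l *: x + (1 - l) *: y) <= l * f x + (1 - l) * f y.

Definition proper_fun (R : realType) (k : nat) (g : 'cV[R]_k -> \bar R) : Prop :=
  (forall x, g x != -oo)%E /\ (exists x, g x < +oo)%E.
Definition econvex_fun (R : realType) (k : nat) (g : 'cV[R]_k -> \bar R) : Prop :=
  forall (x y : 'cV[R]_k) (l : R), 0 < l < 1 ->
    (g (l *: x + (1 - l) *: y)%R <= l%:E * g x + (1 - l)%:E * g y)%E.
Definition proper_closed_convex (R : realType) (k : nat) (g : 'cV[R]_k -> \bar R)
  : Prop := proper_fun g /\ lower_semicontinuous g /\ econvex_fun g.

Definition is_gradient (R : realType) (k : nat) (f : 'cV[R]_k -> R)
  (gradf : 'cV[R]_k -> 'cV[R]_k) : Prop :=
  forall x, differentiable f x /\ forall h, 'd f x h = dotv (gradf x) h.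

From HB Require Import structures.
From mathcomp Require Import all_boot all_order all_algebra.
From mathcomp Require Import all_classical all_reals all_analysis.
From mathcomp Require Import perm ring lra.
Import Order.TTheory GRing.Theory Num.Theory.
Import numFieldNormedType.Exports.
Local Open Scope ring_scope.
Local Open Scope classical_set_scope.

(* By separability, [H(x, T(x))] is the minimum over all steps [h] of the model
   [f(x) + <grad f(x), h> + |h|_L^2/2 + Psi(x + h)].  Along the segment
   [h = a (x^* - x)], [0 <= a <= 1], convexity of [f] (tangent inequality) and of
   [Psi] bound the model by [F^* + (1 - a) D + a^2 R^2 / 2], where
   [D = F(x) - F^*]; minimising this quadratic in [a] gives [a = D / R^2] when
   this is at most [1], and [a = 1] otherwise. *)

Lemma convex_fun_tangent (R : realType) k (f : 'cV[R]_k -> R) (x v : 'cV[R]_k) :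
  convex_fun f -> differentiable f x -> f x + 'd f x v <= f (x + v).
Proof.
(* The difference quotients over [0 < h < 1] are bounded by the chord slope
   [f (x + v) - f x]. *)
move=> cf df; rewrite -deriveE // -lerBrDl.
have dv := diff_derivable (v := v) df; rewrite /derivable in dv; rewrite /derive.
set g := fun h : R => h^-1 *: ((f \o shift x) (h *: v) - f x).
have g_cvg_right : g @ 0^'+ --> lim (g @ 0^').
  move=> A /dv /nbhs_ballP [_ /posnumP[e] xe_A].
  by exists e%:num => //= y xe_y /gt_eqF/negbT/xe_A; exact.
apply: (cvgr_to_le g_cvg_right); near=> h.
have h0 : 0 < h by near: h; exact: nbhs_right_gt.
have h1 : h < 1 by near: h; exact: nbhs_right_lt.
have := cf (x + v) x h; rewrite (ltW h0) (ltW h1) => /(_ isT).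
have -> : h *: (x + v) + (1 - h) *: x = h *: v + x.
  by rewrite scalerDr scalerBl scale1r addrC addrA subrK addrC.
move=> chord; rewrite /g /= -ler_pdivlMl ?invr_gt0 // invrK lerBlDr.
by apply: (le_trans chord); rewrite mulrBr mulrBl mul1r; lra.
Unshelve. all: by end_near. Qed.

Lemma econvex_fun_fin (R : realType) k (g : 'cV[R]_k -> \bar R) u v (a : R) :
  econvex_fun g -> g u \is a fin_num -> g v \is a fin_num -> 0 <= a <= 1 ->
  (g (a *: u + (1 - a) *: v)%R <= (a * fine (g u) + (1 - a) * fine (g v))%:E)%E.
Proof.
move=> cg gu gv /andP[a0 a1].
have [->|a_neq0] := eqVneq a 0.
  by rewrite scale0r add0r subr0 scale1r mul0r add0r mul1r fineK.
have [->|a_neq1] := eqVneq a 1.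
  by rewrite subrr scale0r addr0 scale1r mul0r addr0 mul1r fineK.
have a_in : 0 < a < 1 by rewrite !lt_neqAle eq_sym a_neq0 a_neq1 a0 a1.
by apply: (le_trans (cg _ _ _ a_in)); rewrite -(fineK gu) -(fineK gv).
Qed.

Lemma dotvE (R : realType) k (a b : 'cV[R]_k) : dotv a b = (a^T *m b) 0 0.
Proof. by rewrite /dotv mxE; apply: eq_bigr => j _; rewrite mxE. Qed.

Lemma dotv_mulmxr (R : realType) k m (g : 'cV[R]_k) (A : 'M[R]_(k, m)) t :
  dotv g (A *m t) = dotv (A^T *m g) t.
Proof. by rewrite !dotvE trmx_mul trmxK mulmxA. Qed.

Lemma dotv_sumr (R : realType) k (I : finType) (g : 'cV[R]_k) (u : I -> 'cV[R]_k) :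
  dotv g (\sum_i u i) = \sum_i dotv g (u i).
Proof. by rewrite dotvE mulmx_sumr summxE; apply: eq_bigr => i _; rewrite dotvE. Qed.

Lemma bnormZ (R : realType) k (B : 'M[R]_k) (c : R) t :
  bnorm B (c *: t) ^+ 2 = c ^+ 2 * bnorm B t ^+ 2.
Proof.
have dotvZ : dotv (c *: (B *m t)) (c *: t) = c ^+ 2 * dotv (B *m t) t.
  by rewrite /dotv mulr_sumr; apply: eq_bigr => j _; rewrite !mxE; ring.
rewrite /bnorm -scalemxAr dotvZ sqrtrM ?sqr_ge0 // sqrtr_sqr exprMn.
by rewrite real_normK ?num_real.
Qed.

Section Blocks.
Context {R : realType} {n : nat} {Ns : 'I_n -> nat} {U : 'M[R]_(\sum_(i < n) Ns i)}.

Lemma blkD i a b : blk U i (a + b) = blk U i a + blk U i b.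
Proof. by rewrite /blk mulmxDr. Qed.

Lemma blkZ i (c : R) a : blk U i (c *: a) = c *: blk U i a.
Proof. by rewrite /blk scalemxAr. Qed.

Hypothesis U_perm : is_perm_mx U.

Lemma perm_mx_mulmx_tr : U *m U^T = 1%:M.
Proof. by case/is_perm_mxP: U_perm => s ->; rewrite tr_perm_mx -perm_mxM mulgV perm_mx1. Qed.

Lemma perm_mx_tr_mulmx : U^T *m U = 1%:M.
Proof. by case/is_perm_mxP: U_perm => s ->; rewrite tr_perm_mx -perm_mxM mulVg perm_mx1. Qed.

Lemma blk_sum (t : forall i, 'cV[R]_(Ns i)) i :
  blk U i (\sum_j Ublk U j *m t j) = t i.
Proof.
rewrite /blk /Ublk -mul_mxrow_mxcol submxrowK tr_submxrow submxcol_mul.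
by rewrite mulmxA perm_mx_tr_mulmx mul1mx mxcolK.
Qed.

Lemma sum_Ublk_mulmx_tr : \sum_i Ublk U i *m (Ublk U i)^T = 1%:M.
Proof. by rewrite -perm_mx_mulmx_tr /Ublk -mul_mxrow_mxcol -tr_mxrow submxrowK. Qed.

Lemma sum_blk y : \sum_i Ublk U i *m blk U i y = y.
Proof.
rewrite -[RHS]mul1mx -sum_Ublk_mulmx_tr mulmx_suml.
by apply: eq_bigr => i _; rewrite mulmxA.
Qed.

End Blocks.

Section BlockModel.
Context {R : realType} {n : nat} {Ns : 'I_n -> nat} {U : 'M[R]_(\sum_(i < n) Ns i)}.
Context {B : forall i : 'I_n, 'M[R]_(Ns i)} {L : 'I_n -> R}.
Context {Psi : forall i : 'I_n, 'cV[R]_(Ns i) -> \bar R}.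

Local Notation PsiS y := (\sum_(i < n) Psi i (blk U i y))%E.
Local Notation Lnorm2 y := (\sum_(i < n) L i * bnorm (B i) (blk U i y) ^+ 2).

Lemma Lnorm2_ge0 y : (forall i, 0 < L i) -> 0 <= Lnorm2 y.
Proof. by move=> L_gt0; apply: sumr_ge0 => i _; rewrite mulr_ge0 ?sqr_ge0 // ltW. Qed.

Lemma Lnorm2Z (c : R) y : Lnorm2 (c *: y) = c ^+ 2 * Lnorm2 y.
Proof. by rewrite mulr_sumr; apply: eq_bigr => i _; rewrite blkZ bnormZ mulrCA. Qed.

Hypothesis Psi_pcc : forall i, proper_closed_convex (Psi i).

Lemma psi_sum_neqNy y : PsiS y != -oo%E.
Proof.
apply/eqP => /esum_eqNyP [i [_ _ /eqP]].
by case: (Psi_pcc i) => [[/(_ (blk U i y))/negbTE -> _] _].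
Qed.

Lemma psi_sum_fin_num y : (PsiS y < +oo)%E -> PsiS y \is a fin_num.
Proof. by move=> y_dom; rewrite fin_numE psi_sum_neqNy -ltey y_dom. Qed.

Lemma psi_blk_fin_num y i : (PsiS y < +oo)%E -> Psi i (blk U i y) \is a fin_num.
Proof. by move/psi_sum_fin_num/sum_fin_numP; apply; rewrite ?mem_index_enum. Qed.

Lemma psi_sum_convex u v (a : R) :
  (PsiS u < +oo)%E -> (PsiS v < +oo)%E -> 0 <= a <= 1 ->
  (PsiS (a *: u + (1 - a) *: v) <=
     (a * fine (PsiS u) + (1 - a) * fine (PsiS v))%:E)%E.
Proof.
move=> /psi_blk_fin_num u_fin /psi_blk_fin_num v_fin a01.
rewrite -!sum_fine // !mulr_sumr -big_split -sumEFin /=.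
apply: lee_sum => i _; rewrite blkD !blkZ.
by case: (Psi_pcc i) => [_ [_ Psi_cvx]]; apply: econvex_fun_fin.
Qed.

Context {f : 'cV[R]_(\sum_(i < n) Ns i) -> R}.
Context {gradf : 'cV[R]_(\sum_(i < n) Ns i) -> 'cV[R]_(\sum_(i < n) Ns i)}.
Context {x : 'cV[R]_(\sum_(i < n) Ns i)}.

Local Notation V := (fun (i : 'I_n) (t : 'cV[R]_(Ns i)) =>
  ((dotv (blk U i (gradf x)) t + L i / 2 * bnorm (B i) t ^+ 2)%:E
     + Psi i (blk U i x + t)%R)%E).
Local Notation model := (fun h : 'cV[R]_(\sum_(i < n) Ns i) =>
  ((f x + dotv (gradf x) h + Lnorm2 h / 2)%:E + PsiS (x + h)%R)%E).

Hypothesis U_perm : is_perm_mx U.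

Lemma model_sum_blk (t : forall i, 'cV[R]_(Ns i)) :
  model (\sum_i Ublk U i *m t i) = ((f x)%:E + \sum_i V i (t i))%E.
Proof.
rewrite /= -addrA.
have -> : dotv (gradf x) (\sum_i Ublk U i *m t i) + Lnorm2 (\sum_i Ublk U i *m t i) / 2
          = \sum_i (dotv (blk U i (gradf x)) (t i) + L i / 2 * bnorm (B i) (t i) ^+ 2).
  rewrite big_split dotv_sumr mulr_suml /=; congr (_ + _); apply: eq_bigr => i _.
  - by rewrite dotv_mulmxr.
  - by rewrite blk_sum // mulrAC.
rewrite EFinD -sumEFin big_split /= addeA.
by congr (_ + _)%E; apply: eq_bigr => i _; rewrite blkD blk_sum.
Qed.

Lemma model_le_of_argmin (Tx : forall i, 'cV[R]_(Ns i)) h :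
  (forall i t, (V i (Tx i) <= V i t)%E) ->
  (model (\sum_i Ublk U i *m Tx i)%R <= model h)%E.
Proof.
move=> Tx_min; rewrite -(sum_blk U_perm h) !model_sum_blk.
by apply: leeD2l; apply: lee_sum => i _; apply: Tx_min.
Qed.

Hypotheses (f_convex : convex_fun f) (f_grad : is_gradient f gradf).

Lemma model_segment_le xs (a : R) :
  (PsiS x < +oo)%E -> (PsiS xs < +oo)%E -> 0 <= a <= 1 ->
  (model ((- a) *: (x - xs)) <=
     ((1 - a) * (f x + fine (PsiS x)) + a * (f xs + fine (PsiS xs))
      + a ^+ 2 / 2 * Lnorm2 (x - xs))%:E)%E.
Proof.
move=> x_dom xs_dom a01 /=; set h := (- a) *: (x - xs).
have xhE : x + h = a *: xs + (1 - a) *: x.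
  by apply/matrixP => i j; rewrite !mxE; lra.
have tangent : f x + dotv (gradf x) h <= f (x + h).
  by have [dfx <-] := f_grad x; apply: convex_fun_tangent.
have chord : f (x + h) <= a * f xs + (1 - a) * f x.
  by rewrite xhE; apply: f_convex.
rewrite Lnorm2Z sqrrN xhE.
apply: (le_trans (leeD2l _ (psi_sum_convex _ _ _ xs_dom x_dom a01))).
by rewrite -EFinD lee_fin; lra.
Qed.

End BlockModel.

Lemma descent_step_bound (R : realFieldType) (D r : R) (e : \bar R) :
  0 <= D -> 0 <= r ->
  (forall a, 0 <= a <= 1 -> (e <= ((1 - a) * D + a ^+ 2 / 2 * r)%:E)%E) ->
  (D <= r -> (e <= ((1 - D / (2 * r)) * D)%:E)%E) /\
  (r < D -> (e <= (r / 2)%:E)%E /\ r / 2 < D / 2).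
Proof.
move=> D_ge0 r_ge0 bound; split=> [D_le_r | r_lt_D]; last first.
  split; last by lra.
  by apply: (le_trans (bound 1 _)); rewrite ?ler01 ?lexx // lee_fin expr1n; lra.
have [r_eq0|r_neq0] := eqVneq r 0.
  have D_eq0 : D = 0 by apply/le_anti; rewrite D_ge0 -r_eq0 D_le_r.
  apply: (le_trans (bound 0 _)); first by rewrite lexx ler01.
  by rewrite lee_fin D_eq0 r_eq0; lra.
have r_gt0 : 0 < r by rewrite lt_def r_neq0 r_ge0.
apply: (le_trans (bound (D / r) _)).
  by rewrite divr_ge0 //= ler_pdivrMr // mul1r.
by rewrite lee_fin le_eqVlt; apply/orP; left; apply/eqP; field.
Qed.

Theorem lemma3 (R : realType) (n : nat) (Ns : 'I_n -> nat)
  (U : 'M[R]_(\sum_(i < n) Ns i)) (B : forall i : 'I_n, 'M[R]_(Ns i))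
  (f : 'cV[R]_(\sum_(i < n) Ns i) -> R)
  (gradf : 'cV[R]_(\sum_(i < n) Ns i) -> 'cV[R]_(\sum_(i < n) Ns i))
  (L : 'I_n -> R) (Psi : forall i : 'I_n, 'cV[R]_(Ns i) -> \bar R)
  (xs x : 'cV[R]_(\sum_(i < n) Ns i)) (Tx : forall i : 'I_n, 'cV[R]_(Ns i)) :
  is_perm_mx U ->
  (forall i, posdef (B i)) ->
  convex_fun f ->
  is_gradient f gradf ->
  (forall i, 0 < L i) ->
  (forall y (i : 'I_n) (t : 'cV[R]_(Ns i)),
     bdnorm (B i) (blk U i (gradf (y + Ublk U i *m t)) - blk U i (gradf y))
       <= L i * bnorm (B i) t) ->
  (forall i, proper_closed_convex (Psi i)) ->
  let PsiS := fun y => (\sum_(i < n) Psi i (blk U i y))%E in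
  let F := fun y => ((f y)%:E + PsiS y)%E in
  (forall y, (F xs <= F y)%E) ->
  (PsiS x < +oo)%E ->
  let V := fun (i : 'I_n) (t : 'cV[R]_(Ns i)) =>
    ((dotv (blk U i (gradf x)) t + L i / 2 * bnorm (B i) t ^+ 2)%:E
      + Psi i (blk U i x + t)%R)%E in
  (forall i t, (V i (Tx i) <= V i t)%E) ->
  let T := \sum_(i < n) Ublk U i *m Tx i in
  let Lnorm2 := fun y => \sum_(i < n) L i * bnorm (B i) (blk U i y) ^+ 2 in
  let H := ((f x + dotv (gradf x) T + Lnorm2 T / 2)%:E + PsiS (x + T)%R)%E in
  let Rr := Num.sqrt (Lnorm2 (x - xs)) in
  let D := fine (F x - F xs)%E in
  (D <= Rr ^+ 2 ->
     (H - F xs <= ((1 - D / (2 * Rr ^+ 2)) * D)%:E)%E) /\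
  (Rr ^+ 2 < D ->
     (H - F xs <= (Rr ^+ 2 / 2)%:E)%E /\ Rr ^+ 2 / 2 < D / 2).
Proof.
(* Only convexity enters. *)
move=> U_perm _ f_convex f_grad L_gt0 _ Psi_pcc PsiS F F_min x_dom V Tx_min
  T Lnorm2 H Rr D.
have Fx : F x = (f x + fine (PsiS x))%:E.
  by rewrite EFinD fineK // psi_sum_fin_num.
have xs_dom : (PsiS xs < +oo)%E.
  by rewrite ltey; apply/eqP => xs_inf; move: (F_min x); rewrite Fx /F xs_inf addey.
have Fxs : F xs = (f xs + fine (PsiS xs))%:E.
  by rewrite EFinD fineK // psi_sum_fin_num.
have DE : D = f x + fine (PsiS x) - (f xs + fine (PsiS xs)) by rewrite /D Fx Fxs.
have Rr2 : Rr ^+ 2 = Lnorm2 (x - xs) by rewrite sqr_sqrtr //; apply: Lnorm2_ge0.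
apply: descent_step_bound; [by rewrite DE subr_ge0 -lee_fin -Fx -Fxs | exact: sqr_ge0 |].
move=> a a01; rewrite Fxs leeBlDr //.
apply: (le_trans (model_le_of_argmin U_perm _ ((- a) *: (x - xs)) Tx_min)).
apply: (le_trans (model_segment_le Psi_pcc f_convex f_grad xs a x_dom xs_dom a01)).
rewrite -EFinD lee_fin DE Rr2 -/(PsiS x) -/(PsiS xs) -/(Lnorm2 (x - xs)).
by rewrite le_eqVlt; apply/orP; left; apply/eqP; ring.
Qed.
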